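(* Let $b>0$, let $m\colon[0,+\infty)\to[0,+\infty)$ be an increasing function such that $m(t)\le Ct$ for all $t\ge0$ (for some constant $C$) and $m(t)=0$ for $t\in[0,b)$, and let $Q\colon[0,+\infty)\to[0,+\infty)$ be continuous with $Q(t)=O(t)$ as $t\to+\infty$. Then for every $N\ge0$ there exists $C_2\ge0$ such that for all $b\le r<R<+\infty$ $$\int_r^R\frac{Q(t)}{t^2}\,dm(t)\le C_2\int_r^R t^N\sup_{s\ge t}\frac{Q(s)}{s^{2+N}}\,dt+C_2.$$
   Context: The Stieltjes integral $\int_r^R\dots dm$ is taken over the interval $(r,R]$. *)

From HB Require Import structures.
From mathcomp Require Import all_boot all_order all_algebra.
From mathcomp Require Import all_classical all_reals all_analysis.
Set Implicit Arguments. Unset Strict Implicit. Unset Printing Implicit Defensive.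
Import Order.TTheory GRing.Theory Num.Theory.
Local Open Scope classical_set_scope.
Local Open Scope ring_scope.

Definition tail_sup (R : realType) (Q : R -> R) (N t : R) : \bar R :=
  ereal_sup [set (Q s / s `^ (2 + N))%:E | s in `[t, +oo[%classic].

From HB Require Import structures.
From mathcomp Require Import all_boot all_order all_algebra.
From mathcomp Require Import all_classical all_reals all_analysis.
From mathcomp Require Import measurable_realfun ring lra.
Import Order.TTheory GRing.Theory Num.Theory numFieldNormedType.Exports.
Local Open Scope classical_set_scope.
Local Open Scope ring_scope.

(* Write Q(t)/t^2 = t^N Q(t)/t^(2+N) and let G(t) = sup_{s >= t} Q(s)/s^(2+N),
   a nonincreasing function.  As m(t) <= C t, the measure dm gives ]x, y] mass
   at most m(2y) <= 2Cy, and as Q is continuous and O(t), Q(t) <= K t for t >= b.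
   So the dm-integral of Q(t)/t^2 over ]r, 4r] is at most 8CK, and over a block
   ]2a, 4a] it is at most (4a)^N G(2a) 8Ca, which is 8C 4^N times a lower bound
   for the integral of t^N G(t) dt over the previous block ]a, 2a].  Summing over
   the dyadic blocks covering ]r, R] gives the claim. *)

Section nonneg_integral.
Context {R : realType} (mu : {measure set (measurableTypeR R) -> \bar R}).

Lemma ge0_integral_itv_oc_split [f : R -> \bar R] [x y z : R] :
  x <= y -> y <= z -> measurable_fun `]x, z] f ->
  (forall t, x < t <= z -> (0 <= f t)%E) ->
  (\int[mu]_(t in `]x, z]) f t =
    \int[mu]_(t in `]x, y]) f t + \int[mu]_(t in `]y, z]) f t)%E.
Proof.
move=> xy yz mf f_ge0.
rewrite (@itv_bndbnd_setU _ _ _ (BRight y)) ?bnd_simp//.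
apply: ge0_integral_setU => //=.
- by rewrite -itv_bndbnd_setU ?bnd_simp.
- by move=> t [|]; rewrite in_itv/= => /andP[xt tz]; apply: f_ge0; lra.
- apply/disj_setPS => t [/=]; rewrite !in_itv/= => /andP[_ ty] /andP[].
  by rewrite ltNge ty.
Qed.

Lemma ge0_integral_le_cst [D : set R] [f : R -> \bar R] (M : R) : measurable D ->
  measurable_fun D f -> (forall x, D x -> 0 <= f x <= M%:E)%E ->
  (\int[mu]_(x in D) f x <= M%:E * mu D)%E.
Proof.
move=> mD mf fM; rewrite -integral_cst//.
by apply: ge0_le_integral => // x /fM /andP[].
Qed.

Lemma cst_le_ge0_integral [D : set R] [f : R -> \bar R] (M : R) : measurable D ->
  measurable_fun D f -> 0 <= M -> (forall x, D x -> M%:E <= f x)%E ->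
  (M%:E * mu D <= \int[mu]_(x in D) f x)%E.
Proof.
by move=> mD mf M0 Mf; rewrite -integral_cst//; exact: ge0_le_integral.
Qed.

End nonneg_integral.

Section dyadic_comparison.
Context {R : realType} (mu nu : {measure set (measurableTypeR R) -> \bar R}).
Variables (f g : R -> \bar R) (r c k : R).
Hypotheses (r_gt0 : 0 < r) (c_ge0 : 0 <= c).
Hypotheses (mf : measurable_fun `]r, +oo[ f) (mg : measurable_fun `]r, +oo[ g).
Hypothesis f_ge0 : forall x, r < x -> (0 <= f x)%E.
Hypothesis g_ge0 : forall x, r < x -> (0 <= g x)%E.
Hypothesis int_f_first_block : (\int[mu]_(x in `]r, (4 * r)%R]) f x <= k%:E)%E.
Hypothesis int_f_dyadic_block : forall a, r <= a ->
  (\int[mu]_(x in `](2 * a)%R, (4 * a)%R]) f x <=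
   c%:E * \int[nu]_(x in `]a, (2 * a)%R]) g x)%E.

Let mf_oc (x : R) : measurable_fun `]r, x] f.
Proof. by apply: measurable_funS mf => //; exact: subset_itvl. Qed.

Let mg_oc (x : R) : measurable_fun `]r, x] g.
Proof. by apply: measurable_funS mg => //; exact: subset_itvl. Qed.

Let f_ge0_oc (z t : R) : r < t <= z -> (0 <= f t)%E.
Proof. by case/andP => + _; exact: f_ge0. Qed.

Let g_ge0_oc (z t : R) : r < t <= z -> (0 <= g t)%E.
Proof. by case/andP => + _; exact: g_ge0. Qed.

Let int_g_ge0 (x y : R) : r <= x -> (0 <= \int[nu]_(t in `]x, y]) g t)%E.
Proof.
move=> rx; apply: integral_ge0 => t; rewrite /= in_itv/= => /andP[xt _].
by apply: g_ge0; lra.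
Qed.

(* Shifted by one block: the f-integral up to [2 x] is controlled by the
   g-integral up to [x], which is what makes the induction on blocks close. *)
Lemma dyadic_comparison_shifted (x : R) : r <= x ->
  (\int[mu]_(t in `]r, (2 * x)%R]) f t <=
   c%:E * \int[nu]_(t in `]r, x]) g t + k%:E)%E.
Proof.
(* [lra] ignores section hypotheses, hence the local copy [r0] of [r_gt0]. *)
move=> rx; have r0 := r_gt0.
have [n xn] : exists n : nat, x <= n%:R * r.
  exists (Num.bound (x / r)); rewrite -ler_pdivrMr//.
  by apply/ltW/archi_boundP; rewrite divr_ge0//; lra.
elim: n x rx xn => [|n IH] x rx xn.
  by have := lt_le_trans r_gt0 (le_trans rx xn); rewrite mul0r ltxx.
have [x_le2r|x_gt2r] := leP x (2 * r).
  apply: lee_paddl; first by rewrite mule_ge0 ?lee_fin// int_g_ge0.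
  apply: le_trans int_f_first_block; apply: ge0_subset_integral => //.
  - exact: mf_oc.
  - by move=> t; rewrite /= in_itv/=; exact: f_ge0_oc.
  - by apply: subset_itvl; rewrite bnd_simp; lra.
have [y xE] : exists y, x = 2 * y by exists (x / 2); field.
subst x.
have ry : r <= y by lra.
have yn : y <= n%:R * r by move: xn; rewrite mulrSr mulrDl mul1r; lra.
have r2y : r <= 2 * y by lra.
have y4y : 2 * y <= 2 * (2 * y) by lra.
have y2y : y <= 2 * y by lra.
rewrite (ge0_integral_itv_oc_split mu r2y y4y (mf_oc _) (f_ge0_oc _)).
rewrite (ge0_integral_itv_oc_split nu ry y2y (mg_oc _) (g_ge0_oc _)).
rewrite ge0_muleDr ?int_g_ge0// [X in (_ <= X)%E]addeAC.
apply: leeD; first exact: IH.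
by rewrite (_ : 2 * (2 * y) = 4 * y); [exact: int_f_dyadic_block|ring].
Qed.

Lemma dyadic_comparison (x : R) : r <= x ->
  (\int[mu]_(t in `]r, x]) f t <= c%:E * \int[nu]_(t in `]r, x]) g t + k%:E)%E.
Proof.
move=> rx; have r0 := r_gt0.
apply: le_trans (dyadic_comparison_shifted x rx).
apply: ge0_subset_integral => //.
- exact: mf_oc.
- by move=> t; rewrite /= in_itv/=; exact: f_ge0_oc.
- by apply: subset_itvl; rewrite bnd_simp; lra.
Qed.

End dyadic_comparison.

Section cumulative_right_limit.
Context {R : realType} {m : R -> R} {mr : cumulative R R} {C : R}.
Hypothesis m_nd : forall s t : R, 0 <= s -> s <= t -> m s <= m t.
Hypothesis m_ge0 : forall t : R, 0 <= t -> 0 <= m t.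
Hypothesis m_le : forall t : R, 0 <= t -> m t <= C * t.
Hypothesis mr_lim : forall t : R, 0 <= t -> m x @[x --> t^'+] --> mr t.

Lemma lebesgue_stieltjes_measure_itv_oc (x y : R) : x <= y ->
  lebesgue_stieltjes_measure mr `]x, y] = (mr y - mr x)%:E.
Proof.
move=> xy; rewrite /lebesgue_stieltjes_measure /measure_extension/=.
by rewrite measurable_mu_extE/= ?wlength_itv_bnd//; exact: is_ocitv.
Qed.

Lemma right_limit_ge0 [x : R] : 0 <= x -> 0 <= mr x.
Proof.
move=> x0; apply: (cvgr_to_ge (mr_lim x x0)); near=> y; apply: m_ge0.
by near: y; apply: filterS (nbhs_right_gt x) => y /= xy; lra.
Unshelve. all: by end_near. Qed.

Lemma right_limit_le [x z : R] : 0 <= x -> x < z -> mr x <= m z.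
Proof.
move=> x0 xz; apply: (cvgr_to_le (mr_lim x x0)); near=> y; apply: m_nd.
- by near: y; apply: filterS (nbhs_right_gt x) => y /= xy; lra.
- by near: y; apply: filterS (nbhs_right_lt xz) => y /= yz; lra.
Unshelve. all: by end_near. Qed.

Lemma lebesgue_stieltjes_measure_itv_oc_le (x y : R) : 0 <= x -> x < y ->
  (lebesgue_stieltjes_measure mr `]x, y] <= (2 * C * y)%:E)%E.
Proof.
move=> x0 xy; rewrite lebesgue_stieltjes_measure_itv_oc ?(ltW xy)// lee_fin.
have y2y : y < 2 * y by lra.
have mr_x := right_limit_ge0 x0.
have mr_y := right_limit_le (le_trans x0 (ltW xy)) y2y.
have m_2y : m (2 * y) <= C * (2 * y) by apply: m_le; lra.
lra.
Qed.

End cumulative_right_limit.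

Lemma continuous_linear_growth_le {R : realType} [Q : R -> R] [b A T : R] :
  0 < b -> {within `[b, +oo[, continuous Q} ->
  (forall t, T <= t -> `|Q t| <= A * t) ->
  exists2 K, 0 <= K & forall t, b <= t -> `|Q t| <= K * t.
Proof.
move=> b0 Qc QA; set T' := Num.max T b.
have bT' : b <= T' by rewrite le_max lexx orbT.
have normQc : {within `[b, T'], continuous (fun t => `|Q t|)}.
  have QcbT' : {within `[b, T'], continuous Q}.
    apply: continuous_subspaceW Qc => x /=; rewrite !in_itv/= andbT.
    by case/andP.
  move=> x; apply: continuous_comp (QcbT' x) _; exact: norm_continuous.
have [t0 t0bT' Qt0] := EVT_max bT' normQc.
set M := `|Q t0|.
exists (Num.max (M / b) (Num.max A 0)); first by rewrite !le_max lexx !orbT.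
move=> t bt; have [tT'|T't] := leP t T'.
- apply: le_trans (Qt0 t _) _; first by rewrite in_itv/= bt tT'.
  apply: (@le_trans _ _ (M / b * t)).
    by rewrite mulrAC ler_pdivlMr// ler_wpM2l.
  by apply: ler_wpM2r; [lra|rewrite le_max lexx].
- apply: le_trans (QA t _) _; first by move: T't; rewrite gt_max => /andP[/ltW].
  by apply: ler_wpM2r; [lra|rewrite !le_max lexx !orbT].
Qed.

Lemma nonincreasing_itv_ray_measurable {R : realType} (b : R) (f : R -> R) :
  {in `[b, +oo[ &, {homo f : x y /~ x <= y}} -> measurable_fun `[b, +oo[ f.
Proof.
move=> f_ni; apply: (eq_measurable_fun (f \o Num.max ^~ b)).
  by move=> t; rewrite inE/= in_itv/= andbT => bt /=; rewrite max_l.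
apply: nonincreasing_measurable => // x y xy /=.
have b_le_max z : b <= Num.max z b by rewrite le_max lexx orbT.
apply: f_ni; rewrite ?in_itv/= ?b_le_max//.
by rewrite ge_max !le_max xy lexx orbT.
Qed.

Lemma powR2D {R : realType} (t N : R) : 0 < t -> t `^ (2 + N) = t ^+ 2 * t `^ N.
Proof.
move=> t0; rewrite powRD; last by rewrite (gt_eqF t0) implybT.
by rewrite powR_mulrn// ltW.
Qed.

Section tail_sup.
Context {R : realType} {Q : R -> R} {N : R}.

Lemma tail_sup_ge [t s : R] : t <= s ->
  ((Q s / s `^ (2 + N))%:E <= tail_sup Q N t)%E.
Proof.
by move=> ts; apply: ereal_sup_ubound; exists s => //=; rewrite in_itv/= ts.
Qed.

Lemma tail_sup_nonincreasing [s t : R] : s <= t ->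
  (tail_sup Q N t <= tail_sup Q N s)%E.
Proof.
move=> st; apply: ereal_sup_le => _ [u /= + <-]; rewrite in_itv/= andbT => tu.
by exists u => //=; rewrite in_itv/= andbT (le_trans st).
Qed.

Lemma tail_sup_ge0 [t : R] : 0 <= Q t -> (0 <= tail_sup Q N t)%E.
Proof.
move=> Qt0; apply: le_trans (tail_sup_ge (lexx t)).
by rewrite lee_fin divr_ge0 ?powR_ge0.
Qed.

Context {b K : R}.
Hypotheses (b_gt0 : 0 < b) (N_ge0 : 0 <= N) (K_ge0 : 0 <= K).
Hypothesis Q_le : forall t, b <= t -> Q t <= K * t.

Lemma tail_sup_le [t : R] : b <= t ->
  (tail_sup Q N t <= (K / (b * b `^ N))%:E)%E.
Proof.
move=> bt; apply: ge_ereal_sup => _ [s /= + <-]; rewrite in_itv/= andbT => ts.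
have bs := le_trans bt ts; have s_gt0 := lt_le_trans b_gt0 bs.
rewrite lee_fin powR2D//.
have sN_gt0 : 0 < s `^ N by rewrite powR_gt0.
have bN_gt0 : 0 < b `^ N by rewrite powR_gt0.
apply: (@le_trans _ _ (K * s / (s ^+ 2 * s `^ N))).
  by apply: ler_wpM2r; [rewrite invr_ge0 mulr_ge0 ?sqr_ge0 ?powR_ge0|exact: Q_le].
have -> : K * s / (s ^+ 2 * s `^ N) = K / (s * s `^ N).
  by field; rewrite !gt_eqF.
rewrite ler_wpM2l// lef_pV2 ?posrE ?mulr_gt0//.
apply: ler_pM; [exact: ltW|exact: ltW|exact: bs|].
by apply: (ge0_ler_powR N_ge0) => //; rewrite nnegrE ltW.
Qed.

Lemma tail_sup_fin_num [t : R] : b <= t -> tail_sup Q N t \is a fin_num.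
Proof.
move=> bt; apply/fin_numPlt/andP; split.
- exact: lt_le_trans (ltNyr _) (tail_sup_ge (lexx t)).
- exact: le_lt_trans (tail_sup_le bt) (ltry _).
Qed.

Lemma measurable_tail_sup_integrand :
  measurable_fun `[b, +oo[ (fun t => ((t `^ N)%:E * tail_sup Q N t)%E).
Proof.
apply: (eq_measurable_fun (fun t => (t `^ N * fine (tail_sup Q N t))%:E)).
  move=> t; rewrite inE/= in_itv/= andbT => bt.
  by rewrite EFinM fineK ?tail_sup_fin_num.
apply/measurable_EFinP/measurable_funM.
  by apply: measurable_funTS; exact: measurable_powR.
apply: nonincreasing_itv_ray_measurable => s t.
rewrite !in_itv/= !andbT => bs bt st.
by rewrite fine_le ?tail_sup_fin_num// tail_sup_nonincreasing.
Qed.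

End tail_sup.

Lemma measurable_div_sqr {R : realType} [Q : R -> R] [b : R] : 0 < b ->
  {within `[b, +oo[, continuous Q} ->
  measurable_fun `[b, +oo[ (fun t => (Q t / t ^+ 2)%:E).
Proof.
move=> b0 Qc; apply/measurable_EFinP/measurable_funM.
  exact: subspace_continuous_measurable_fun.
have : measurable_fun (`]0, +oo[ : set R) (fun t => (t ^+ 2)^-1).
  apply: open_continuous_measurable_fun; first exact: interval_open.
  move=> t; rewrite inE/= in_itv/= andbT => t0.
  apply: (@continuousV _ _ (fun x : R => x ^+ 2)); last exact: exprn_continuous.
  by rewrite expf_neq0// gt_eqF.
apply: measurable_funS => // t /=; rewrite !in_itv/= !andbT.
exact: lt_le_trans.
Qed.

Lemma mulr_powR_div {R : realType} (x N t : R) : 0 < t ->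
  t `^ N * (x / t `^ (2 + N)) = x / t ^+ 2.
Proof.
move=> t0; rewrite powR2D//.
by field; rewrite !gt_eqF ?powR_gt0.
Qed.

Section stieltjes_estimates.
Context {R : realType} {mu : {measure set (measurableTypeR R) -> \bar R}}.
Context {Q : R -> R} {b C K N : R}.
Hypotheses (b_gt0 : 0 < b) (C_ge0 : 0 <= C) (K_ge0 : 0 <= K) (N_ge0 : 0 <= N).
Hypothesis Qc : {within `[b, +oo[, continuous Q}.
Hypothesis Q_ge0 : forall t, b <= t -> 0 <= Q t.
Hypothesis Q_le : forall t, b <= t -> Q t <= K * t.
Hypothesis mu_itv_oc_le : forall x y : R, 0 <= x -> x < y ->
  (mu `]x, y]%classic <= (C * y)%:E)%E.

Let F t := (Q t / t ^+ 2)%:E.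
Let H t := ((t `^ N)%:E * tail_sup Q N t)%E.

Let measurable_F (x : R) (y : itv_bound R) : b <= x ->
  measurable_fun [set` Interval (BRight x) y] F.
Proof.
move=> bx; have := measurable_div_sqr b_gt0 Qc.
by apply: measurable_funS => //; apply: subset_itv; rewrite bnd_simp.
Qed.

Let measurable_H (x : R) (y : itv_bound R) : b <= x ->
  measurable_fun [set` Interval (BRight x) y] H.
Proof.
move=> bx; have := measurable_tail_sup_integrand b_gt0 N_ge0 K_ge0 Q_le.
by apply: measurable_funS => //; apply: subset_itv; rewrite bnd_simp.
Qed.

Lemma integral_div_sqr_first_block_le (r : R) : b <= r ->
  (\int[mu]_(t in `]r, (4 * r)%R]) F t <= (4 * C * K)%:E)%E.
Proof.
move=> br; have r_gt0 := lt_le_trans b_gt0 br.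
have F_le t : `]r, 4 * r]%classic t -> (0 <= F t <= (K / r)%:E)%E.
  rewrite /= in_itv/= => /andP[rt _].
  have t_gt0 := lt_trans r_gt0 rt; have bt : b <= t by lra.
  rewrite !lee_fin divr_ge0 ?sqr_ge0 ?Q_ge0//=.
  apply: (@le_trans _ _ (K * t / t ^+ 2)).
    by apply: ler_wpM2r; [rewrite invr_ge0 sqr_ge0|exact: Q_le].
  rewrite expr2 invfM mulrA mulfK ?gt_eqF//.
  by rewrite ler_wpM2l// lef_pV2 ?posrE// ltW.
have mu_le : (mu `]r, (4 * r)%R]%classic <= (C * (4 * r))%:E)%E.
  by apply: mu_itv_oc_le; lra.
apply: le_trans (ge0_integral_le_cst mu _ (measurable_itv _)
  (measurable_F _ _ br) F_le) _.
apply: le_trans (lee_wpmul2l _ mu_le) _; first by rewrite lee_fin divr_ge0// ltW.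
rewrite -EFinM lee_fin (_ : K / r * (C * (4 * r)) = 4 * C * K)//.
by field; rewrite gt_eqF.
Qed.

Lemma integral_div_sqr_dyadic_block_le (a : R) : b <= a ->
  (\int[mu]_(t in `](2 * a)%R, (4 * a)%R]) F t <=
   (4 * C * 4 `^ N)%:E * \int[lebesgue_measure]_(t in `]a, (2 * a)%R]) H t)%E.
Proof.
move=> ba; have a_gt0 := lt_le_trans b_gt0 ba.
have b2a : b <= 2 * a by lra.
set g := fine (tail_sup Q N (2 * a)).
have tsE : tail_sup Q N (2 * a) = g%:E.
  by rewrite fineK// (tail_sup_fin_num b_gt0 N_ge0 K_ge0 Q_le).
have g_ge0 : 0 <= g by rewrite -lee_fin -tsE tail_sup_ge0// Q_ge0.
have F_le t : `](2 * a), (4 * a)]%classic t ->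
    (0 <= F t <= ((4 * a) `^ N * g)%:E)%E.
  rewrite /= in_itv/= => /andP[a2t t4a].
  have t_gt0 : 0 < t by lra.
  have bt : b <= t by lra.
  rewrite !lee_fin divr_ge0 ?sqr_ge0 ?Q_ge0//= -(mulr_powR_div _ N _ t_gt0).
  apply: ler_pM.
  - exact: powR_ge0.
  - by rewrite divr_ge0 ?Q_ge0 ?powR_ge0.
  - by apply: (ge0_ler_powR N_ge0) => //; rewrite ?nnegrE; lra.
  - by rewrite -lee_fin -tsE tail_sup_ge// ltW.
have H_ge t : `]a, 2 * a]%classic t -> ((a `^ N * g)%:E <= H t)%E.
  rewrite /= in_itv/= => /andP[a_t t2a].
  rewrite /H EFinM -tsE; apply: lee_pmul.
  - by rewrite lee_fin powR_ge0.
  - by rewrite tsE lee_fin.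
  - by rewrite lee_fin; apply: (ge0_ler_powR N_ge0) => //; rewrite ?nnegrE; lra.
  - exact: tail_sup_nonincreasing.
have mu_le : (mu `](2 * a)%R, (4 * a)%R]%classic <= (C * (4 * a))%:E)%E.
  by apply: mu_itv_oc_le; lra.
have leb_a : lebesgue_measure (`]a, (2 * a)%R] : set R) = a%:E.
  rewrite lebesgue_measure_itv/= lte_fin ifT; last lra.
  by rewrite -EFinB; congr _%:E; ring.
have int_H : ((a `^ N * g * a)%:E <=
    \int[lebesgue_measure]_(t in `]a, (2 * a)%R]) H t)%E.
  rewrite EFinM -leb_a; apply: cst_le_ge0_integral H_ge => //.
  - exact: measurable_H.
  - by rewrite mulr_ge0 ?powR_ge0.
apply: le_trans (ge0_integral_le_cst mu _ (measurable_itv _)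
  (measurable_F _ _ b2a) F_le) _.
apply: le_trans (lee_wpmul2l _ mu_le) _.
  by rewrite lee_fin mulr_ge0 ?powR_ge0.
have c_ge0 : (0 <= (4 * C * 4 `^ N)%:E)%E.
  by rewrite lee_fin !mulr_ge0 ?powR_ge0.
apply: le_trans (lee_wpmul2l c_ge0 int_H).
rewrite -!EFinM lee_fin powRM; [|lra|lra].
by rewrite (_ : _ * (C * (4 * a)) = 4 * C * 4 `^ N * (a `^ N * g * a))//; ring.
Qed.

Lemma integral_div_sqr_le_tail_sup [r R' : R] : b <= r -> r < R' ->
  (\int[mu]_(t in `]r, R']) F t <=
   (4 * C * 4 `^ N)%:E * \int[lebesgue_measure]_(t in `]r, R']) H t +
   (4 * C * K)%:E)%E.
Proof.
move=> br rR'; have r_gt0 := lt_le_trans b_gt0 br.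
apply: (dyadic_comparison mu lebesgue_measure F H r) => //.
- by rewrite !mulr_ge0 ?powR_ge0.
- exact: measurable_F.
- exact: measurable_H.
- move=> t rt; rewrite lee_fin divr_ge0 ?sqr_ge0// Q_ge0//; lra.
- move=> t rt; rewrite mule_ge0 ?lee_fin ?powR_ge0// tail_sup_ge0// Q_ge0//; lra.
- exact: integral_div_sqr_first_block_le.
- by move=> a ra; apply: integral_div_sqr_dyadic_block_le; lra.
- exact: ltW.
Qed.

End stieltjes_estimates.

Theorem lemma4 (R : realType) (b : R) (m Q : R -> R) (mr : cumulative R R) :
  0 < b ->
  (forall s t, 0 <= s -> s <= t -> m s <= m t) ->
  (forall t, 0 <= t -> 0 <= m t) ->
  (exists C : R, forall t, 0 <= t -> m t <= C * t) ->
  (forall t, 0 <= t -> t < b -> m t = 0) ->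
  (* mr is the right-continuous regularization t |-> m(t+) of m on [0,+oo) *)
  (forall t, 0 <= t -> m x @[x --> t^'+] --> mr t) ->
  {within `[0, +oo[, continuous Q} ->
  (forall t, 0 <= t -> 0 <= Q t) ->
  (exists A T : R, forall t, T <= t -> `|Q t| <= A * t) ->
  forall N : R, 0 <= N ->
  exists C2 : R, 0 <= C2 /\
    forall r R' : R, b <= r -> r < R' ->
      (\int[lebesgue_stieltjes_measure mr]_(t in `]r, R']) (Q t / t ^+ 2)%:E
       <= C2%:E * \int[lebesgue_measure]_(t in `]r, R'])
                     ((t `^ N)%:E * tail_sup Q N t) + C2%:E)%E.
Proof.
move=> b_gt0 m_nd m_ge0 [C1 m_le1] _ mr_lim Qc Q_ge0 [A [T QA]] N N_ge0.
pose C := Num.max C1 0.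
have C_ge0 : 0 <= C by rewrite le_max lexx orbT.
have m_le t : 0 <= t -> m t <= C * t.
  by move=> t0; apply: le_trans (m_le1 t t0) _; rewrite ler_wpM2r// le_max lexx.
have Qcb : {within `[b, +oo[, continuous Q}.
  apply: continuous_subspaceW Qc => t /=; rewrite !in_itv/= !andbT.
  exact/le_trans/ltW.
have [K K_ge0 QK] := continuous_linear_growth_le b_gt0 Qcb QA.
have Q_le t : b <= t -> Q t <= K * t.
  by move=> bt; exact: le_trans (ler_norm _) (QK t bt).
have Qb_ge0 t : b <= t -> 0 <= Q t by move=> bt; apply: Q_ge0; lra.
have mu_le := lebesgue_stieltjes_measure_itv_oc_le m_nd m_ge0 m_le mr_lim.
have C2_ge0 : 0 <= 2 * C by lra.
set c := 4 * (2 * C) * 4 `^ N; set k := 4 * (2 * C) * K.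
exists (Num.max c k); split; first by rewrite le_max !mulr_ge0 ?powR_ge0.
move=> r R' br rR'.
apply: le_trans (integral_div_sqr_le_tail_sup b_gt0 C2_ge0 K_ge0 N_ge0 Qcb Qb_ge0
  Q_le mu_le br rR') _.
apply: leeD; last by rewrite lee_fin le_max lexx orbT.
apply: lee_wpmul2r; last by rewrite lee_fin le_max lexx.
apply: integral_ge0 => t; rewrite /= in_itv/= => /andP[rt _].
by rewrite mule_ge0 ?lee_fin ?powR_ge0// tail_sup_ge0// Q_ge0//; lra.
Qed.
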